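(* Let $\varphi:=\frac{16}{3}\mathbb{1}-2\sqrt5 f_{24}$ and $\widetilde\varphi(t):=\varphi(-t)$ on $\mathbb{Z}/24\mathbb{Z}$, and for $a:\mathbb{Z}/24\mathbb{Z}\to[0,\infty)$ let $\mathcal N(a):=\max(9\|a\|_\infty,\|a\|_1)$. Then for every $a:\mathbb{Z}/24\mathbb{Z}\to[0,\infty)$, $$\mathcal N\big((a*\varphi)_+\big)\le2\mathcal N(a)\quad\text{and}\quad \mathcal N\big((a*\widetilde\varphi)_+\big)\le2\mathcal N(a).$$
   Context: $\mathbb{1}$ is the constant function $1$ on $\mathbb{Z}/24\mathbb{Z}$; $f_{24}(t):=\#\{j\in\mathbb{Z}/24\mathbb{Z}:j^2\equiv t\ (\mathrm{mod}\ 24)\}$; $(a*\psi)(t):=\frac1{24}\sum_{j\in\mathbb{Z}/24\mathbb{Z}}a(j)\psi(t-j)$; $x_+:=\max(x,0)$ pointwise; $\|h\|_\infty:=\max_t|h(t)|$, $\|h\|_1:=\sum_t|h(t)|$. *)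

From mathcomp Require Import all_boot all_order all_algebra.
From mathcomp Require Import reals.
Set Implicit Arguments. Unset Strict Implicit. Unset Printing Implicit Defensive.
Import Order.TTheory GRing.Theory Num.Theory.
Local Open Scope ring_scope.

Definition Z24 := 'Z_24.

Definition f24 (t : Z24) : nat := #|[set j : Z24 | j * j == t]|.

Definition phi (R : realType) (t : Z24) : R :=
  16 / 3 - 2 * Num.sqrt 5 * (f24 t)%:R.

Definition phit (R : realType) (t : Z24) : R := phi R (- t).

Definition conv (R : realType) (a psi : Z24 -> R) (t : Z24) : R :=
  24^-1 * \sum_(j : Z24) a j * psi (t - j).

Definition posp (R : realType) (h : Z24 -> R) (t : Z24) : R := Num.max (h t) 0.

Definition norminf (R : realType) (h : Z24 -> R) : R :=
  \big[Num.max/0]_(t : Z24) `|h t|.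

Definition norm1 (R : realType) (h : Z24 -> R) : R := \sum_(t : Z24) `|h t|.

Definition NN (R : realType) (a : Z24 -> R) : R :=
  Num.max (9 * norminf a) (norm1 a).

From Stdlib Require Import NArith Lia.
From mathcomp Require Import all_boot all_order all_algebra.
From mathcomp Require Import reals ring lra.
Import Order.TTheory GRing.Theory Num.Theory.

(* Since phi <= 16/3, every value of a * phi is at most (2/9) |a|_1, which gives
   the bound on 9 |(a * phi)_+|_oo.  For the l^1 part, phi <= phi' := 16/3 - 22/5 f24
   (as 2 sqrt 5 >= 22/5), and |(a * phi')_+|_1 = 1/24 sum_j a(j) w(j), where w(j) sums
   phi'(t - j) over the set P of those t with (a * phi')(t) >= 0.  Under
   0 <= a <= N(a)/9 and sum a <= N(a) this linear form is largest for
   a = N(a)/9 on at most nine points (a fractional knapsack argument), so it suffices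
   that sum_{j in J} sum_{t in P} phi'(t - j) <= 432 whenever #|J| <= 9.  As
   phi' = 2/15 (40 - 33 f24), this is the integer inequality
   sum_t (40 #|J| - 33 sum_{j in J} f24(t - j))_+ <= 3240, which is invariant under
   translating J and is checked by computer for all J containing 0.  The reflected
   kernel reduces to the same inequality through j |-> -j. *)

Definition f24_nat (d : nat) : nat := count (fun j => j * j %% 24 == d) (iota 0 24).

Lemma card_set_val_count n (p : pred nat) :
  #|[set j : 'I_n | p j]| = count p (iota 0 n).
Proof.
rewrite cardsE cardE /enum_mem size_filter -(val_enum_ord n) count_map enumT.
by apply: eq_count => x; rewrite inE.
Qed.

Lemma f24_sub (t s : nat) : t < 24 -> s < 24 ->
  f24 (inZp t - inZp s)%R = f24_nat ((t + (24 - s)) %% 24).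
Proof.
move=> t24 s24; rewrite /f24 /f24_nat -card_set_val_count.
by apply: eq_card => x; rewrite !inE -val_eqE /= (modn_small t24) (modn_small s24) modnDmr.
Qed.

Definition shift_row (s : nat) : seq N :=
  [seq N.of_nat (33 * f24_nat ((t + (24 - s)) %% 24)) | t <- iota 0 24].
Arguments shift_row : simpl never.

Lemma size_shift_row s : size (shift_row s) = 24.
Proof. by rewrite size_map size_iota. Qed.

Lemma nth_shift_row s t : t < 24 ->
  N.to_nat (nth 0%num (shift_row s) t) = 33 * f24_nat ((t + (24 - s)) %% 24).
Proof. by move=> t24; rewrite (nth_map 0) ?size_iota // nth_iota // Nat2N.id. Qed.

Fixpoint addNseq (g r : seq N) : seq N :=
  match g, r with
  | x :: g', y :: r' => (x + y)%num :: addNseq g' r'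
  | [::], _ => r
  | _, [::] => g
  end.

Definition zero24 : seq N := nseq 24 0%num.

Lemma nth_addNseq g r t : nth 0%num (addNseq g r) t = (nth 0%num g t + nth 0%num r t)%num.
Proof.
by elim: g r t => [|x g IH] [|y r] [|t] //=; rewrite ?nth_nil ?N.add_0_l ?N.add_0_r.
Qed.

Lemma size_addNseq g r : size (addNseq g r) = maxn (size g) (size r).
Proof. by elim: g r => [|x g IH] [|y r] //=; rewrite ?max0n ?maxn0 ?IH ?maxnSS. Qed.

Lemma addNseq_zero24 r : size r = 24 -> addNseq zero24 r = r.
Proof. by rewrite /zero24 => <-; elim: r => //= x r ->. Qed.

Lemma foldl_addNseq_cons g r rows :
  foldl addNseq g (r :: rows) = foldl addNseq (addNseq g r) rows.
Proof. by []. Qed.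

Lemma nth_foldl_addNseq g rows t :
  N.to_nat (nth 0%num (foldl addNseq g rows) t) =
  N.to_nat (nth 0%num g t) + \sum_(r <- rows) N.to_nat (nth 0%num r t).
Proof.
elim: rows g => [|r rows IH] g /=; first by rewrite big_nil addn0.
by rewrite IH big_cons nth_addNseq N2Nat.inj_add addnA.
Qed.

Lemma size_foldl_addNseq n g rows : size g = n -> all (fun r => size r == n) rows ->
  size (foldl addNseq g rows) = n.
Proof.
elim: rows g => [|r rows IH] g //= size_g /andP[/eqP size_r size_rows].
by apply: IH => //; rewrite size_addNseq size_g size_r maxnn.
Qed.

(* [N] subtraction truncates at 0, so this is sum_x (c - x)_+. *)
Definition excessN (c : N) (g : seq N) : N :=
  foldr (fun x acc => (c - x + acc)%num) 0%num g.

Lemma excessN_sum c g :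
  N.to_nat (excessN c g) = \sum_(x <- g) (N.to_nat c - N.to_nat x).
Proof.
elim: g => [|x g IH] /=; first by rewrite big_nil.
by rewrite big_cons N2Nat.inj_add N2Nat.inj_sub IH.
Qed.

Lemma excessN_rows (c : N) (ss : seq nat) :
  N.to_nat (excessN c (foldl addNseq zero24 [seq shift_row s | s <- ss])) =
  \sum_(0 <= t < 24) (N.to_nat c - 33 * \sum_(s <- ss) f24_nat ((t + (24 - s)) %% 24)).
Proof.
have size_g : size (foldl addNseq zero24 [seq shift_row s | s <- ss]) = 24.
  apply: size_foldl_addNseq => //.
  by apply/allP => _ /mapP[s _ ->]; rewrite size_shift_row.
rewrite excessN_sum (big_nth 0%num) size_g.
apply: eq_big_nat => t /andP[_ t24].
rewrite nth_foldl_addNseq nth_nseq t24 add0n big_map big_distrr /=.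
by congr (_ - _); apply: eq_bigr => s _; rewrite nth_shift_row.
Qed.

Definition excess_ok (k : nat) (g : seq N) : bool :=
  (excessN (40 * N.of_nat k) g <=? 3240)%num.
Arguments excess_ok : simpl never.

(* Depth-first search over the subsequences of [rows] with at most [9 - k] rows:
   [k] counts the rows already added to [g], and each leaf tests the sum.  The
   inner [if] (rather than [==>]) keeps the pruned branch unevaluated. *)
Fixpoint walk (rows : seq (seq N)) (k : nat) (g : seq N) : bool :=
  match rows with
  | [::] => excess_ok k g
  | r :: rows' =>
      walk rows' k g && (if k < 9 then walk rows' k.+1 (addNseq g r) else true)
  end.

Lemma walk_mask rows : forall k g m, walk rows k g -> size m = size rows ->
  k + count id m <= 9 -> excess_ok (k + count id m) (foldl addNseq g (mask m rows)).
Proof.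
elim: rows => [|r rows IH] k g [|b m] //=; first by rewrite addn0.
move=> /andP[walk_skip walk_take] [size_m]; case: b => /=.
- rewrite add1n addnS -addSn => km9.
  have k9 : k < 9 by rewrite (leq_trans _ km9) // ltnS leq_addr.
  by rewrite k9 in walk_take; apply: IH.
- by rewrite add0n; apply: IH.
Qed.

Lemma walk_filter l k g (P : pred nat) : walk [seq shift_row s | s <- l] k g ->
  k + count P l <= 9 ->
  excess_ok (k + count P l) (foldl addNseq g [seq shift_row s | s <- l & P s]).
Proof.
rewrite filter_mask map_mask -[count P l](count_map P id) => walk_l km9.
by apply: walk_mask; rewrite // !size_map.
Qed.

Lemma walk_shift_rows : walk [seq shift_row s | s <- iota 1 23] 1 (shift_row 0).
Proof. vm_compute. reflexivity. Qed.

Lemma excess_ok_cons0 l (P : pred nat) :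
  walk [seq shift_row s | s <- l] 1 (shift_row 0) -> P 0 -> count P (0 :: l) <= 9 ->
  excess_ok (count P (0 :: l))
    (foldl addNseq zero24 [seq shift_row s | s <- 0 :: l & P s]).
Proof.
move=> walk_l P0; rewrite /= P0 add1n map_cons foldl_addNseq_cons.
rewrite addNseq_zero24 ?size_shift_row // -add1n.
exact: walk_filter.
Qed.

Lemma excess_ok_filter (P : pred nat) : P 0 -> count P (iota 0 24) <= 9 ->
  excess_ok (count P (iota 0 24))
    (foldl addNseq zero24 [seq shift_row s | s <- iota 0 24 & P s]).
Proof. exact: excess_ok_cons0 walk_shift_rows. Qed.

Lemma excess_ok_le k g : excess_ok k g -> N.to_nat (excessN (40 * N.of_nat k) g) <= 3240.
Proof.
by rewrite /excess_ok => /N.leb_le; move: (excessN _ _) => x le_x; apply/ssrnat.leP; lia.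
Qed.

Lemma big_Z24 (P : pred Z24) (F : Z24 -> nat) :
  \sum_(j : Z24 | P j) F j = \sum_(0 <= s < 24 | P (inZp s)) F (inZp s).
Proof. by rewrite big_mkord; apply: eq_big => [i|i _]; rewrite valZpK. Qed.

Lemma sum_Z24_filter (J : {set Z24}) (F : Z24 -> nat) :
  \sum_(j in J) F j = \sum_(s <- [seq s <- iota 0 24 | inZp s \in J]) F (inZp s).
Proof. by rewrite big_filter big_Z24. Qed.

Lemma card_Z24 (J : {set Z24}) : #|J| = count (fun s => inZp s \in J) (iota 0 24).
Proof. by rewrite -sum1_card sum_Z24_filter sum1_size size_filter. Qed.

Definition excess (J : {set Z24}) : nat :=
  \sum_(t : Z24) (40 * #|J| - 33 * \sum_(j in J) f24 (t - j)%R).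

Lemma excess_excessN J : excess J =
  N.to_nat (excessN (40 * N.of_nat #|J|)
    (foldl addNseq zero24 [seq shift_row s | s <- iota 0 24 & inZp s \in J])).
Proof.
rewrite excessN_rows N2Nat.inj_mul Nat2N.id /excess big_Z24.
apply: eq_big_nat => t /andP[_ t24]; congr (_ - 33 * _).
rewrite sum_Z24_filter; apply: eq_big_seq => s.
by rewrite mem_filter mem_iota => /andP[_ /andP[_ s24]]; apply: f24_sub.
Qed.

Lemma excess_le_of_mem0 (J : {set Z24}) : 0%R \in J -> #|J| <= 9 -> excess J <= 3240.
Proof.
move=> J0 J9; rewrite excess_excessN; apply: excess_ok_le.
rewrite card_Z24 in J9 *; apply: excess_ok_filter J9.
by rewrite (_ : inZp 0 = 0%R) //; apply: val_inj.
Qed.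

Lemma excess_translate (J : {set Z24}) (c : Z24) : excess [set (j - c)%R | j in J] = excess J.
Proof.
have sub_inj : injective (fun j : Z24 => (j - c)%R) by apply: addIr.
rewrite /excess card_imset // (reindex_inj (addIr (- c)%R)) /=.
apply: eq_bigr => t _; congr (_ - 33 * _).
rewrite big_imset /=; last by move=> x y _ _; apply: sub_inj.
by apply: eq_bigr => j _; rewrite opprB addrA subrK.
Qed.

Lemma excess_le (J : {set Z24}) : #|J| <= 9 -> excess J <= 3240.
Proof.
move=> J9; have [->|[j0 j0J]] := set_0Vmem J.
  by rewrite /excess big1 // => t _; rewrite cards0.
rewrite -(excess_translate J j0); apply: excess_le_of_mem0.
  by apply/imsetP; exists j0; rewrite ?subrr.
by rewrite card_imset //; apply: addIr.
Qed.

Local Open Scope ring_scope.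

Lemma subr_le_natrB (R : numDomainType) (m n : nat) : m%:R - n%:R <= (m - n)%N%:R :> R.
Proof.
have [nm|mn] := leqP n m; first by rewrite natrB.
by rewrite (@le_trans _ _ 0) // subr_le0 ler_nat ltnW.
Qed.

Definition phi_major (R : realType) (s : Z24) : R := 16 / 3 - 22 / 5 * (f24 s)%:R.

(* For 0 <= a <= N/9 with sum a <= N this bounds sum_j a(j) sum_{t in P} psi(t - j)
   by 432 N/9 = 24 * 2N. *)
Definition nine_shift_bounded {R : realType} (psi : Z24 -> R) :=
  forall J P : {set Z24}, (#|J| <= 9)%N -> \sum_(j in J) \sum_(t in P) psi (t - j) <= 432.

Lemma sum_phi_major (R : realType) (J : {set Z24}) (t : Z24) :
  \sum_(j in J) phi_major R (t - j) =
  2 / 15 * ((40 * #|J|)%:R - (33 * \sum_(j in J) f24 (t - j)%R)%:R).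
Proof.
rewrite /phi_major sumrB sumr_const -mulr_sumr -natr_sum !natrM -mulr_natl; lra.
Qed.

Lemma phi_major_bounded (R : realType) : nine_shift_bounded (phi_major R).
Proof.
move=> J P J9; rewrite exchange_big /=.
under eq_bigr => t _ do rewrite sum_phi_major.
rewrite -mulr_sumr.
suff : \sum_(t in P) ((40 * #|J|)%:R - (33 * \sum_(j in J) f24 (t - j)%R)%:R) <= 3240 :> R
  by lra.
apply: le_trans (_ : (excess J)%:R <= _); last by rewrite ler_nat excess_le.
rewrite /excess natr_sum [X in _ <= X](bigID [in P]) /= -[X in X <= _]addr0.
apply: lerD; last by apply: sumr_ge0 => t _; apply: ler0n.
by apply: ler_sum => t _; apply: subr_le_natrB.
Qed.

Lemma nine_shift_bounded_opp (R : realType) (psi : Z24 -> R) :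
  nine_shift_bounded psi -> nine_shift_bounded (fun s => psi (- s)).
Proof.
move=> psi_bd J P J9.
have opp_inj : injective (fun x : Z24 => - x) by apply: oppr_inj.
have := psi_bd [set - j | j in J] [set - t | t in P].
rewrite card_imset // big_imset /=; last by move=> x y _ _; apply: opp_inj.
move=> /(_ J9); apply: le_trans; rewrite le_eqVlt; apply/orP; left; apply/eqP.
apply: eq_bigr => j _; rewrite big_imset /=; last by move=> x y _ _; apply: opp_inj.
by apply: eq_bigr => t _; rewrite opprB opprK addrC.
Qed.

Section FractionalKnapsack.
Variables (R : realFieldType) (T : finType) (w : T -> R) (m : R).
Hypothesis m_ge0 : 0 <= m.

Lemma exists_scale_split (S y z : R) : 0 <= y -> 0 <= z -> S <= y + z ->
  exists2 lam, 0 <= lam <= 1 & lam * S <= y /\ (1 - lam) * S <= z.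
Proof.
move=> y0 z0 Syz; have [Sy|yS] := lerP S y.
  by exists 1; rewrite ?ler01 ?lexx // mul1r subrr mul0r.
have S_gt0 : 0 < S by apply: le_lt_trans yS.
have lamS : y / S * S = y by rewrite divfK ?gt_eqF.
exists (y / S); first by rewrite divr_ge0 ?(ltW S_gt0) //= ler_pdivrMr // mul1r ltW.
by rewrite mulrBl mul1r lamS; split; lra.
Qed.

Lemma subset_sum_le_setD1 (B : R) (k : nat) (D : {set T}) (j0 : T) : j0 \in D ->
  (forall J : {set T}, J \subset D -> (#|J| <= k.+1)%N -> \sum_(j in J) w j <= B) ->
  forall J : {set T}, J \subset D :\ j0 -> (#|J| <= k)%N -> \sum_(j in J) w j <= B - w j0.
Proof.
move=> j0D wD J JD Jk.
have j0J : j0 \notin J by apply/negP => /(subsetP JD); rewrite !inE eqxx.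
have := wD (j0 |: J); rewrite big_setU1 //= cardsU1 j0J ltnS.
rewrite subUset sub1set j0D (subset_trans JD) ?subsetDl // => /(_ isT Jk); lra.
Qed.

Lemma fractional_knapsack (k : nat) (a : T -> R) (B : R) (D : {set T}) :
  (forall J : {set T}, J \subset D -> (#|J| <= k)%N -> \sum_(j in J) w j <= B) ->
  (forall j, 0 <= a j <= m) -> \sum_(j in D) a j <= k%:R * m ->
  \sum_(j in D) a j * w j <= B * m.
Proof.
elim: k a B D => [|k IH] a B D wD a_bd sum_a.
all: have B0 : 0 <= B by have := wD set0 (sub0set D); rewrite cards0 big_set0; apply.
all: have a_ge0 j : 0 <= a j by case/andP: (a_bd j).
- rewrite big1 ?mulr_ge0 // => j jD; suff -> : a j = 0 by rewrite mul0r.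
  move: sum_a; rewrite mul0r => sum_a.
  by apply/eqP; rewrite eq_le a_ge0 andbT (le_trans _ sum_a) // (bigD1 j) //= lerDl sumr_ge0.
- have [->|[j1 j1D]] := set_0Vmem D; first by rewrite big_set0 mulr_ge0.
  have [j0 j0D w_max] := arg_maxP w j1D.
  have [w0|w0] := lerP (w j0) 0.
    rewrite (le_trans _ (mulr_ge0 B0 m_ge0)) // sumr_le0 // => j jD.
    by rewrite mulr_ge0_le0 // (le_trans (w_max j jD)).
  rewrite (big_setD1 _ j0D) /= (big_setD1 _ j0D) /= in sum_a *.
  set S := \sum_(i in D :\ j0) a i in sum_a *.
  set X := \sum_(i in D :\ j0) a i * w i.
  have a_le j : a j <= m by case/andP: (a_bd j).
  have [lam /andP[lam0 lam1] [lamS lamS']] : exists2 lam, 0 <= lam <= 1 &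
      lam * S <= k%:R * m /\ (1 - lam) * S <= m - a j0.
    apply: exists_scale_split; rewrite ?mulr_ge0 ?subr_ge0 //.
    by move: sum_a; rewrite -addn1 natrD mulrDl mul1r; lra.
  have IH_lam : lam * X <= (B - w j0) * m.
    rewrite /X mulr_sumr (eq_bigr (fun i => lam * a i * w i)) => [|i _]; last by rewrite mulrA.
    apply: IH; first exact: subset_sum_le_setD1.
      by move=> j; rewrite mulr_ge0 //= (le_trans _ (a_le j)) // ler_piMl.
    by rewrite -mulr_sumr.
  have X_le : X <= S * w j0.
    rewrite /X /S mulr_suml; apply: ler_sum => j; rewrite inE => /andP[_ jD].
    by rewrite ler_wpM2l //; apply: w_max.
  have : (1 - lam) * X <= (m - a j0) * w j0.
    by rewrite (le_trans (ler_wpM2l _ X_le)) ?subr_ge0 // mulrA ler_wpM2r // ltW.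
  nra.
Qed.
End FractionalKnapsack.

Section PositivePartOfConvolution.
Context {R : realType} {a : Z24 -> R}.
Hypothesis a_ge0 : forall t, 0 <= a t.

Lemma norm1_nneg : norm1 a = \sum_t a t.
Proof. by apply: eq_bigr => t _; rewrite ger0_norm. Qed.

Lemma le_norminf (h : Z24 -> R) t : `|h t| <= norminf h.
Proof. exact: le_bigmax. Qed.

Lemma posp_ge0 (h : Z24 -> R) t : 0 <= posp h t.
Proof. by rewrite /posp le_max lexx orbT. Qed.

Lemma conv_le_const (psi : Z24 -> R) (c : R) t : (forall s, psi s <= c) ->
  conv a psi t <= c / 24 * \sum_j a j.
Proof.
move=> psi_le; rewrite mulrAC mulrC mulr_sumr ler_wpM2l ?invr_ge0 // ler_sum // => j _.
by rewrite [c * _]mulrC ler_wpM2l.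
Qed.

Lemma conv_le_conv (psi psi' : Z24 -> R) t : (forall s, psi s <= psi' s) ->
  conv a psi t <= conv a psi' t.
Proof.
move=> psi_le; rewrite ler_wpM2l ?invr_ge0 // ler_sum // => j _.
exact: ler_wpM2l.
Qed.

Lemma sum_conv_in (psi : Z24 -> R) (P : {set Z24}) :
  \sum_(t in P) conv a psi t = 24^-1 * \sum_j a j * \sum_(t in P) psi (t - j).
Proof.
rewrite -mulr_sumr exchange_big /=; congr (_ * _).
by apply: eq_bigr => j _; rewrite mulr_sumr.
Qed.

Lemma norminf_posp_conv_le {psi : Z24 -> R} : (forall s, psi s <= 16 / 3) ->
  9 * norminf (posp (conv a psi)) <= 2 * norm1 a.
Proof.
move=> psi_le; rewrite norm1_nneg.
have sum_a_ge0 : 0 <= \sum_t a t by apply: sumr_ge0 => t _.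
suff : norminf (posp (conv a psi)) <= 2 / 9 * \sum_t a t by lra.
apply: bigmax_le => [|t _]; first lra.
have := conv_le_const _ _ t psi_le.
by rewrite ger0_norm ?posp_ge0 // ge_max => ?; apply/andP; split; lra.
Qed.

Lemma sum_posp (h : Z24 -> R) : \sum_t posp h t = \sum_(t in [set t | 0 <= h t]) h t.
Proof. by rewrite [RHS]big_mkcond; apply: eq_bigr => t _; rewrite inE /posp; case: lerP. Qed.

Lemma norm1_posp (h : Z24 -> R) : norm1 (posp h) = \sum_t posp h t.
Proof. by apply: eq_bigr => t _; rewrite ger0_norm ?posp_ge0. Qed.

Lemma norm1_posp_conv_le {psi psi' : Z24 -> R} :
  (forall s, psi s <= psi' s) -> nine_shift_bounded psi' ->
  norm1 (posp (conv a psi)) <= 2 * NN a.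
Proof.
move=> psi_le psi'_bd; set P := [set t | 0 <= conv a psi' t].
have : norm1 (posp (conv a psi)) <= \sum_(t in P) conv a psi' t.
  rewrite norm1_posp -sum_posp; apply: ler_sum => t _.
  by apply: le_max2 => //; apply: conv_le_conv.
rewrite sum_conv_in.
have NN_ge_norminf : 9 * norminf a <= NN a by rewrite le_max lexx.
have NN_ge_norm1 : norm1 a <= NN a by rewrite le_max lexx orbT.
have a_le j : a j <= NN a / 9.
  by have := le_norminf a j; rewrite ger0_norm //; lra.
have sum_setT (F : Z24 -> R) : \sum_(j in [set: Z24]) F j = \sum_j F j.
  by apply: eq_bigl => j; rewrite in_setT.
suff : \sum_j a j * \sum_(t in P) psi' (t - j) <= 432 * (NN a / 9) by lra.
rewrite -sum_setT; apply: fractional_knapsack => [|J _|j|].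
- exact: le_trans (a_ge0 0) (a_le 0).
- exact: psi'_bd.
- by rewrite a_ge0 a_le.
- by rewrite sum_setT -norm1_nneg; lra.
Qed.

Lemma NN_posp_conv_le {psi psi' : Z24 -> R} :
  (forall s, psi s <= 16 / 3) -> (forall s, psi s <= psi' s) -> nine_shift_bounded psi' ->
  NN (posp (conv a psi)) <= 2 * NN a.
Proof.
move=> psi_le psi_le' psi'_bd; rewrite /NN ge_max (norm1_posp_conv_le psi_le' psi'_bd).
by rewrite andbT (le_trans (norminf_posp_conv_le psi_le)) // ler_pM2l // le_max lexx orbT.
Qed.
End PositivePartOfConvolution.

Lemma sqrt5_ge (R : realType) : 11 / 5 <= Num.sqrt 5 :> R.
Proof.
have -> : 11 / 5 = Num.sqrt ((11 / 5) ^+ 2) :> R by rewrite sqrtr_sqr ger0_norm // divr_ge0.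
by apply: ler_wsqrtr; rewrite expr2; lra.
Qed.

Lemma phi_le_phi_major (R : realType) (s : Z24) : phi R s <= phi_major R s.
Proof.
rewrite /phi /phi_major.
have := ler_wpM2r (ler0n R (f24 s)) (sqrt5_ge R); lra.
Qed.

Lemma phi_le (R : realType) (s : Z24) : phi R s <= 16 / 3.
Proof.
have : 0 <= 2 * Num.sqrt 5 * (f24 s)%:R :> R by rewrite !mulr_ge0 ?sqrtr_ge0.
rewrite /phi; lra.
Qed.

Theorem mainTheorem16 (R : realType) (a : Z24 -> R) :
  (forall t, 0 <= a t) ->
  NN (posp (conv a (phi R))) <= 2 * NN a /\
  NN (posp (conv a (phit R))) <= 2 * NN a.
Proof.
move=> a_ge0; split; apply: (NN_posp_conv_le a_ge0).
- exact: phi_le.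
- exact: phi_le_phi_major.
- exact: phi_major_bounded.
- by move=> s; apply: phi_le.
- by move=> s; apply: phi_le_phi_major.
- exact/nine_shift_bounded_opp/phi_major_bounded.
Qed.
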